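(* Let $\mathrm{cost}(n)=\ell(n)/\pi(n)$ for nodes $n$ (with value $+\infty$ when $\pi(n)=0$), and for a state $s$ let $\mathrm{cost}(s)=\min\{\mathrm{cost}(n): T(n)=s\}$. Then LevinTS run with policy $\pi$ expands states in best-first order and at their lowest cost first: (i) for any two states $s_1,s_2$ with $\mathrm{cost}(s_1)<\mathrm{cost}(s_2)$, if LevinTS selects a node $n$ with $T(n)=s_2$, then it has previously selected a node $n'$ with $T(n')=s_1$; (ii) for every state $s$, the first node $n$ with $T(n)=s$ selected by LevinTS satisfies $\mathrm{cost}(n)=\mathrm{cost}(s)$.
   Context: Setting: a finite action set $\mathcal{A}$, a set of states $\mathcal{S}$ with initial state $s_0$, a deterministic transition function $T:\mathcal{S}\times\mathcal{A}\to\mathcal{S}$, and a set of goal states $\mathcal{G}\subseteq\mathcal{S}$. Nodes are finite sequences of actions; the root $n_0$ is the empty sequence; $T(n)$ is the state reached from $s_0$ by applying the actions of $n$ in order; the children of $n$ are $na$, $a\in\mathcal{A}$. For a node $n$ consisting of $t$ actions, $\ell(n):=t+1$ (so $\ell(n_0)=1$). A policy is a function $\pi$ from nodes to $[0,1]$ with $\pi(n_0)=1$ and $\pi(n)=\sum_{a\in\mathcal{A}}\pi(na)$; write $\pi(a\mid n)=\pi(na)/\pi(n)$. The policy is Markovian if $\pi(a\mid n_1)=\pi(a\mid n_2)$ for all actions $a$ and all nodes $n_1,n_2$ with $T(n_1)=T(n_2)$. LevinTS: maintain a frontier $\mathcal{F}$, initially $\{n_0\}$, and a record set $\mathcal{V}$,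 initially $\emptyset$. While $\mathcal{F}\neq\emptyset$: remove from $\mathcal{F}$ a node $n$ minimizing $\ell(n)/\pi(n)$ (this is the node selected/expanded at this iteration); if $T(n)\in\mathcal{G}$, stop with success; if $\pi$ is Markovian, then if there is $n'\in\mathcal{V}$ with $T(n')=T(n)$ and $\pi(n')\ge\pi(n)$, skip to the next iteration (state cut), and otherwise add $n$ to $\mathcal{V}$; finally add all children of $n$ to $\mathcal{F}$. *)

From mathcomp Require Import all_boot all_order all_algebra.
From mathcomp Require Import boolp classical_sets reals ereal.
Set Implicit Arguments. Unset Strict Implicit. Unset Printing Implicit Defensive.
Import Order.TTheory GRing.Theory Num.Theory.
Local Open Scope ring_scope.
Local Open Scope ereal_scope.

Section LevinTS.
Variables (R : realType) (A : finType) (S : Type) (s0 : S) (T : S -> A -> S)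
  (G : S -> Prop) (pi : seq A -> R).

(* nodes are finite action sequences; the root is [::]; children of n are rcons n a *)
Definition node := seq A.

Definition Tn (n : node) : S := foldl T s0 n.

Definition ell (n : node) : nat := (size n).+1.

Definition is_policy : Prop :=
  pi [::] = 1%R /\
  (forall n, (0 <= pi n <= 1)%R) /\
  (forall n : node, pi n = (\sum_(a : A) pi (rcons n a))%R).

Definition cond_pi (a : A) (n : node) : R := (pi (rcons n a) / pi n)%R.

(* Markovian: the conditional distributions agree at nodes reaching the same
   state (whenever they are defined, i.e. pi(n1), pi(n2) > 0) *)
Definition markovian : Prop :=
  forall (a : A) (n1 n2 : node), (0 < pi n1)%R -> (0 < pi n2)%R ->
    Tn n1 = Tn n2 -> cond_pi a n1 = cond_pi a n2.

Definition cost (n : node) : \bar R :=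
  if pi n == 0%R then +oo else ((ell n)%:R / pi n)%:E.

(* cost(s) = min { cost(n) | T(n) = s } (infimum; +oo if s is unreachable) *)
Definition cost_state (s : S) : \bar R :=
  ereal_inf [set cost n | n in [set n | Tn n = s]].

Definition children (n : node) : seq node := [seq rcons n a | a <- enum A].

Record config := Config { frontier : seq node; visited : seq node }.

Definition init_config : config := Config [:: [::]] [::].

Definition state_cut (c : config) (n : node) : Prop :=
  markovian /\ exists2 n', n' \in visited c & Tn n' = Tn n /\ (pi n <= pi n')%R.

(* one iteration of LevinTS selecting (removing from F) the node n.
   Termination on success is modelled by emptying the frontier. *)
Inductive step : config -> node -> config -> Prop :=
  | step_goal c n :
      n \in frontier c -> (forall m, m \in frontier c -> cost n <= cost m) ->
      G (Tn n) -> step c n (Config [::] (visited c))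
  | step_cut c n :
      n \in frontier c -> (forall m, m \in frontier c -> cost n <= cost m) ->
      ~ G (Tn n) -> state_cut c n ->
      step c n (Config (rem n (frontier c)) (visited c))
  | step_expand c n :
      n \in frontier c -> (forall m, m \in frontier c -> cost n <= cost m) ->
      ~ G (Tn n) -> ~ state_cut c n ->
      step c n (Config (rem n (frontier c) ++ children n)
                  (if `[< markovian >] then n :: visited c else visited c)).

(* run c tr : tr is the (finite prefix of the) sequence of nodes selected by
   LevinTS from configuration c, for some resolution of ties *)
Inductive run : config -> seq node -> Prop :=
  | run_nil c : run c [::]
  | run_cons c n c' tr : step c n c' -> run c' tr -> run c (n :: tr).

End LevinTS.

(* Along an extension of a node, [ell] grows and [pi] shrinks, so [cost] is
   monotone and LevinTS selects nodes in nondecreasing cost.  Let [x] be a node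
   cheaper than the node selected at time [i], and follow [x] from the root
   through its longest prefix [m] selected before [i].  If [m] was expanded, the
   next prefix of [x] entered the frontier and was never selected, so it costs
   at least the node selected at [i], which is impossible.  If [m] was cut by
   an earlier, cheaper and more probable node [n'] with the same state, then,
   the policy being Markovian, [pi] scales by the same factor along any suffix
   of [m] and of [n'], so replacing [m] by [n'] in [x] gives a node with the
   same state that is again cheaper; induction on the time of selection of [m]
   concludes.  Hence the state of every cheaper node was reached before [i],
   which gives both claims through the infimum defining [cost_state]. *)
From mathcomp Require Import all_boot all_order all_algebra.
From mathcomp Require Import boolp classical_sets reals ereal.
From mathcomp Require Import ring lra.
Import Order.TTheory GRing.Theory Num.Theory.
Set Implicit Arguments. Unset Strict Implicit. Unset Printing Implicit Defensive.
Local Open Scope ereal_scope.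

Lemma Tn_cat (A : finType) (S : Type) (s0 : S) (T : S -> A -> S) (n s : seq A) :
  Tn s0 T (n ++ s) = foldl T (Tn s0 T n) s.
Proof. exact: foldl_cat. Qed.

Lemma cost_state_le (R : realType) (A : finType) (S : Type) (s0 : S)
  (T : S -> A -> S) (pi : seq A -> R) (n : seq A) :
  cost_state s0 T pi (Tn s0 T n) <= cost pi n.
Proof. by apply: ereal_inf_lbound; exists n. Qed.

Lemma cost_state_ltP (R : realType) (A : finType) (S : Type) (s0 : S)
  (T : S -> A -> S) (pi : seq A -> R) (s : S) (c : \bar R) :
  cost_state s0 T pi s < c -> exists2 n, Tn s0 T n = s & cost pi n < c.
Proof. by move=> /ereal_inf_lt [_ [n Tn_n <-] cost_lt]; exists n. Qed.

Section PolicyCost.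
Variables (R : realType) (A : finType) (S : Type) (s0 : S) (T : S -> A -> S)
  (pi : seq A -> R).
Hypothesis pi_policy : is_policy pi.

Local Notation cost := (cost pi).

Lemma pi_ge0 n : (0 <= pi n)%R.
Proof. by case: pi_policy => _ [pi01 _]; case/andP: (pi01 n). Qed.

Lemma pi_rcons_le n a : (pi (rcons n a) <= pi n)%R.
Proof.
case: pi_policy => _ [_ pi_sum]; rewrite [X in (_ <= X)%R]pi_sum (bigD1 a) //=.
by rewrite lerDl sumr_ge0 // => b _; apply: pi_ge0.
Qed.

Lemma pi_cat_le n s : (pi (n ++ s) <= pi n)%R.
Proof.
elim/last_ind: s => [|s a IHs]; first by rewrite cats0.
by rewrite -rcons_cat (le_trans (pi_rcons_le _ _)).
Qed.

Lemma cost_rcons n a : cost n <= cost (rcons n a).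
Proof.
rewrite /cost; have [|pina_neq0] := eqVneq (pi (rcons n a)) 0%R; first by rewrite leey.
have pina_gt0 : (0 < pi (rcons n a))%R by rewrite lt_def pina_neq0 pi_ge0.
have pin_gt0 : (0 < pi n)%R := lt_le_trans pina_gt0 (pi_rcons_le _ _).
rewrite (gt_eqF pin_gt0) lee_fin ler_pM ?invr_ge0 ?pi_ge0 //.
  by rewrite ler_nat /ell size_rcons.
by rewrite lef_pV2 ?posrE ?pi_rcons_le.
Qed.

Lemma cost_cat n s : cost n <= cost (n ++ s).
Proof.
elim/last_ind: s => [|s a IHs]; first by rewrite cats0.
by rewrite -rcons_cat (le_trans IHs (cost_rcons _ _)).
Qed.

Lemma pi_gt0_of_cost n : cost n < +oo -> (0 < pi n)%R.
Proof.
rewrite /cost; have [_|pin_neq0 _] := eqVneq (pi n) 0%R; first by rewrite ltxx.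
by rewrite lt_def pin_neq0 pi_ge0.
Qed.

Lemma markovian_pi_cat m n s : markovian s0 T pi ->
  (0 < pi m)%R -> (0 < pi n)%R -> Tn s0 T n = Tn s0 T m -> (0 < pi (m ++ s))%R ->
  (pi (n ++ s) * pi m = pi (m ++ s) * pi n)%R.
Proof.
move=> pi_markov pim_gt0 pin_gt0 Tnm.
elim/last_ind: s => [|s a IHs]; first by rewrite !cats0 mulrC.
rewrite -!rcons_cat => pima_gt0.
have pims_gt0 : (0 < pi (m ++ s))%R := lt_le_trans pima_gt0 (pi_rcons_le _ _).
have {}IHs := IHs pims_gt0.
have pins_gt0 : (0 < pi (n ++ s))%R.
  by rewrite -(pmulr_lgt0 _ pim_gt0) IHs mulr_gt0.
have Tnms : Tn s0 T (n ++ s) = Tn s0 T (m ++ s) by rewrite !Tn_cat Tnm.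
have := pi_markov a _ _ pins_gt0 pims_gt0 Tnms.
rewrite /cond_pi => /eqP.
rewrite eqr_div ?(gt_eqF pins_gt0) ?(gt_eqF pims_gt0) // => /eqP E.
apply: (mulIf (lt0r_neq0 pims_gt0)); rewrite mulrAC E -mulrA IHs; ring.
Qed.

Lemma cost_cat_le_scaled m n s : cost n <= cost m -> (pi m <= pi n)%R ->
  (0 < pi m)%R -> (0 < pi (m ++ s))%R ->
  (pi (n ++ s) * pi m = pi (m ++ s) * pi n)%R ->
  cost (n ++ s) <= cost (m ++ s).
Proof.
move=> cost_nm pimn pim_gt0 pims_gt0 Escale.
have pin_gt0 : (0 < pi n)%R := lt_le_trans pim_gt0 pimn.
have pins_gt0 : (0 < pi (n ++ s))%R.
  by rewrite -(pmulr_lgt0 _ pim_gt0) Escale mulr_gt0.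
move: cost_nm; rewrite /cost !gt_eqF // !lee_fin /ell !size_cat -!addSn !natrD.
move: (size n).+1%:R%R (size m).+1%:R%R (size s)%:R%R (ler0n R (size s)) => ln lm k k_ge0.
rewrite ler_pdivrMr // mulrAC ler_pdivlMr // => ln_lm.
rewrite ler_pdivrMr // mulrAC ler_pdivlMr //.
rewrite -(ler_pM2r pim_gt0) -[X in (_ <= X)%R]mulrA Escale.
have k_pims_ge0 : (0 <= k * pi (m ++ s))%R by rewrite mulr_ge0 // ltW.
nra.
Qed.

End PolicyCost.

Section Run.
Variables (R : realType) (A : finType) (S : Type) (s0 : S) (T : S -> A -> S)
  (G : S -> Prop) (pi : seq A -> R).
Hypothesis pi_policy : is_policy pi.

Local Notation step := (step s0 T G pi).
Local Notation cost := (cost pi).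
Local Notation Tn := (Tn s0 T).

Lemma run_configs c tr : run s0 T G pi c tr -> exists cs : nat -> config A,
  cs 0%N = c /\ forall i, (i < size tr)%N -> step (cs i) (nth [::] tr i) (cs i.+1).
Proof.
elim=> [c0|c0 n c' tr' step_c0 _ [cs [cs0 cs_step]]]; first by exists (fun=> c0).
exists (fun i => if i is j.+1 then cs j else c0); split => // -[|i] /=.
  by rewrite cs0.
exact: cs_step.
Qed.

Lemma step_inv c n c' : step c n c' ->
  [/\ n \in frontier c, (forall m, m \in frontier c -> cost n <= cost m) &
   [\/ c' = Config [::] (visited c),
       state_cut s0 T pi c n /\ c' = Config (rem n (frontier c)) (visited c) |
       c' = Config (rem n (frontier c) ++ children n)
                  (if `[< markovian s0 T pi >] then n :: visited c else visited c)]].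
Proof.
by case=> {}c {}n n_in n_min *; split=> //; [apply: Or31|apply: Or32|apply: Or33].
Qed.

Variables (tr : seq (seq A)) (cs : nat -> config A).
Hypothesis cs0 : cs 0%N = init_config A.
Hypothesis cs_step :
  forall i, (i < size tr)%N -> step (cs i) (nth [::] tr i) (cs i.+1).

Local Notation sel i := (nth [::] tr i).

Lemma sel_in_frontier i : (i < size tr)%N -> sel i \in frontier (cs i).
Proof. by move=> /cs_step /step_inv []. Qed.

Lemma sel_cost_min i m :
  (i < size tr)%N -> m \in frontier (cs i) -> cost (sel i) <= cost m.
Proof. by move=> /cs_step /step_inv [_ sel_min _]; apply: sel_min. Qed.

Lemma sel0 : (0 < size tr)%N -> sel 0 = [::].
Proof. by move=> /sel_in_frontier; rewrite cs0 inE => /eqP. Qed.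

(* A goal test empties the frontier, so only the last selection can succeed. *)
Lemma frontier_nonempty i : (i.+1 < size tr)%N -> frontier (cs i.+1) != [::].
Proof. by move=> /sel_in_frontier sel_in; apply/eqP => cs_nil; rewrite cs_nil in sel_in. Qed.

Lemma visited_sel t v : (t <= size tr)%N -> v \in visited (cs t) ->
  exists2 t', (t' < t)%N & sel t' = v.
Proof.
elim: t => [|t IHt] t_le; first by rewrite cs0.
have IHt' : v \in visited (cs t) -> exists2 t', (t' < t.+1)%N & sel t' = v.
  by move=> /(IHt (ltnW t_le)) [t' t't <-]; exists t' => //; apply: ltnW.
have [_ _ [->|[_ ->]|->]] //= := step_inv (cs_step t_le).
by case: ifP => // _; rewrite inE => /orP [/eqP ->|]; [exists t|].
Qed.

Lemma visited_cost_le t v y : (t <= size tr)%N ->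
  v \in visited (cs t) -> y \in frontier (cs t) -> cost v <= cost y.
Proof.
elim: t v y => [|t IHt] v y t_le; first by rewrite cs0.
have {}IHt w z := IHt w z (ltnW t_le).
have [sel_in sel_min [->|[_ ->]|->]] //= := step_inv (cs_step t_le).
  by move=> v_in /mem_rem; apply: IHt v_in.
have new_visited_le w : w \in (if `[< markovian s0 T pi >] then sel t :: visited (cs t)
    else visited (cs t)) -> forall z, z \in frontier (cs t) -> cost w <= cost z.
  case: ifP => _; last by move=> w_in z; apply: IHt.
  by rewrite inE => /orP [/eqP -> //|w_in z]; apply: IHt.
move=> /new_visited_le v_le; rewrite mem_cat => /orP [/mem_rem|/mapP [a _ ->]].
  exact: v_le.
exact: le_trans (v_le _ sel_in) (cost_rcons pi_policy _ _).
Qed.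

Lemma frontier_rem_next i : (i.+1 < size tr)%N ->
  {subset rem (sel i) (frontier (cs i)) <= frontier (cs i.+1)}.
Proof.
move=> i1_lt y y_in; have [_ _ []] := step_inv (cs_step (ltnW i1_lt)).
- by move=> cs_goal; have := frontier_nonempty i1_lt; rewrite cs_goal.
- by move=> [_ ->].
- by move=> -> /=; rewrite mem_cat y_in.
Qed.

Lemma cut_or_children_next i : (i.+1 < size tr)%N ->
  state_cut s0 T pi (cs i) (sel i) \/
  {subset children (sel i) <= frontier (cs i.+1)}.
Proof.
move=> i1_lt; have [_ _ []] := step_inv (cs_step (ltnW i1_lt)).
- by move=> cs_goal; have := frontier_nonempty i1_lt; rewrite cs_goal.
- by move=> [cut _]; left.
- by move=> -> /=; right=> y y_in; rewrite mem_cat y_in orbT.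
Qed.

Lemma frontier_persist u i y : (u <= i)%N -> (i < size tr)%N ->
  y \in frontier (cs u) -> (forall w, (u <= w < i)%N -> sel w != y) ->
  y \in frontier (cs i).
Proof.
elim: i => [|i IHi] u_le i_lt y_in not_sel.
  by move: u_le; rewrite leqn0 => /eqP <-.
move: u_le; rewrite leq_eqVlt ltnS => /orP [/eqP <- //|u_le_i].
apply: frontier_rem_next => //; apply: rem_mem.
  by rewrite eq_sym; apply: not_sel; rewrite u_le_i ltnSn.
apply: IHi u_le_i (ltnW i_lt) y_in _ => w /andP [u_le_w w_lt].
by apply: not_sel; rewrite u_le_w ltnS ltnW.
Qed.

Lemma cut_dominated t : (t < size tr)%N -> state_cut s0 T pi (cs t) (sel t) ->
  exists2 t', (t' < t)%N & forall s, (0 < pi (sel t ++ s))%R ->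
    [/\ Tn (sel t' ++ s) = Tn (sel t ++ s), (0 < pi (sel t' ++ s))%R
      & cost (sel t' ++ s) <= cost (sel t ++ s)].
Proof.
move=> t_lt [pi_markov [n n_in [Tn_eq pi_le]]].
have [t' t'_lt sel_t'] := visited_sel (ltnW t_lt) n_in.
exists t' => // s pims_gt0; rewrite sel_t'.
have pim_gt0 := lt_le_trans pims_gt0 (pi_cat_le pi_policy _ _).
have pin_gt0 := lt_le_trans pim_gt0 pi_le.
have Escale := markovian_pi_cat pi_policy pi_markov pim_gt0 pin_gt0 Tn_eq pims_gt0.
split; first by rewrite !Tn_cat Tn_eq.
  by rewrite -(pmulr_lgt0 _ pim_gt0) Escale mulr_gt0.
apply: cost_cat_le_scaled => //.
exact: visited_cost_le (ltnW t_lt) n_in (sel_in_frontier t_lt).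
Qed.

Lemma sel_extension_reached i suf t : (i < size tr)%N -> (t < i)%N ->
  (0 < pi (sel t ++ suf))%R -> cost (sel t ++ suf) < cost (sel i) ->
  exists2 j, (j < i)%N & Tn (sel j) = Tn (sel t ++ suf).
Proof.
move=> i_lt; elim: suf t => [|a suf IHsuf] t; first by exists t; rewrite ?cats0.
elim/ltn_ind: t => t IHt t_lt pi_gt0 cost_lt.
have [[w w_lt sel_w]|not_sel] :=
  pselect (exists2 w, (w < i)%N & sel w = rcons (sel t) a).
  rewrite -cat_rcons -sel_w in pi_gt0 cost_lt *.
  exact: IHsuf w_lt pi_gt0 cost_lt.
have t1_lt : (t.+1 < size tr)%N := leq_ltn_trans t_lt i_lt.
have [cut|children_in] := cut_or_children_next t1_lt.
  have [t' t'_lt /(_ _ pi_gt0) [<- pi'_gt0 cost_le]] := cut_dominated (ltnW t1_lt) cut.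
  exact: IHt t'_lt (ltn_trans t'_lt t_lt) pi'_gt0 (le_lt_trans cost_le cost_lt).
have child_in : rcons (sel t) a \in frontier (cs i).
  apply: (frontier_persist t_lt i_lt) => [|w /andP [_ w_lt]].
    by apply: children_in; apply/mapP; exists a; rewrite ?mem_enum.
  by apply/eqP => sel_w; apply: not_sel; exists w.
have := le_trans (sel_cost_min i_lt child_in) (cost_cat pi_policy _ suf).
by rewrite cat_rcons leNgt cost_lt.
Qed.

Lemma cheaper_state_reached i x : (i < size tr)%N -> cost x < cost (sel i) ->
  exists2 j, (j < i)%N & Tn (sel j) = Tn x.
Proof.
move=> i_lt cost_lt.
have sel0_nil : sel 0 = [::] := sel0 (leq_ltn_trans (leq0n i) i_lt).
have [i0|i_gt0] := posnP i.
  by move: cost_lt; rewrite i0 sel0_nil ltNge (cost_cat pi_policy [::] x).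
have pix_gt0 := pi_gt0_of_cost pi_policy (lt_le_trans cost_lt (leey _)).
by have := @sel_extension_reached i x 0 i_lt i_gt0; rewrite sel0_nil; apply.
Qed.

End Run.

Theorem theorem2 (R : realType) (A : finType) (S : Type) (s0 : S)
  (T : S -> A -> S) (G : S -> Prop) (pi : seq A -> R) :
  is_policy pi ->
  forall tr : seq (seq A), run s0 T G pi (init_config A) tr ->
  (* (i) best-first order over states *)
  (forall (s1 s2 : S) (i : nat),
      cost_state s0 T pi s1 < cost_state s0 T pi s2 ->
      (i < size tr)%N -> Tn s0 T (nth [::] tr i) = s2 ->
      exists j : nat, (j < i)%N /\ Tn s0 T (nth [::] tr j) = s1) /\
  (* (ii) each state is first selected at its lowest cost *)
  (forall (s : S) (i : nat),
      (i < size tr)%N -> Tn s0 T (nth [::] tr i) = s ->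
      (forall j : nat, (j < i)%N -> Tn s0 T (nth [::] tr j) <> s) ->
      cost pi (nth [::] tr i) = cost_state s0 T pi s).
Proof.
move=> pi_policy tr run_tr; have [cs [cs0 cs_step]] := run_configs run_tr.
have reached := cheaper_state_reached pi_policy cs0 cs_step.
split=> [s1 s2 i cost_lt i_lt sel_s2|s i i_lt sel_s first_sel].
  have cost_s1_lt : cost_state s0 T pi s1 < cost pi (nth [::] tr i).
    by rewrite (lt_le_trans cost_lt) // -sel_s2 cost_state_le.
  have [x <- x_lt] := cost_state_ltP cost_s1_lt.
  by have [j j_lt <-] := reached _ _ i_lt x_lt; exists j.
apply/eqP; rewrite -sel_s eq_le cost_state_le andbT leNgt.
apply/negP => cost_s_lt; have [x Tn_x x_lt] := cost_state_ltP cost_s_lt.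
have [j j_lt Tn_j] := reached _ _ i_lt x_lt.
by apply: (first_sel j j_lt); rewrite Tn_j Tn_x.
Qed.
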